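(* Let $G=(V,E)$ be a graph with $n$ vertices and maximum degree $\Delta$, and let $l_v\in\{0,1\}$, $v\in V$, be parities with $\sum_{v\in V} l_v \equiv 1 \pmod 2$. Let $\Phi$ be the corresponding Tseitin formula and $K\subseteq[0,1]^E$ its SAT polytope. Then $\Phi$ has a cutting plane refutation of length $2^\Delta (n\Delta)^{O(\log n)}$, i.e., there is a list $\mathcal{L}=(\mathbf{a}_1,\dots,\mathbf{a}_N)$ of vectors in $\mathbb{Z}^E$ with $\mathrm{CG}(K,\mathcal{L})=\emptyset$ and $N \le 2^\Delta (n\Delta)^{c\log n}$ for an absolute constant $c$.
   Context: The Tseitin formula $\Phi$ has Boolean variables $x_e$, $e\in E$; for each vertex $v$ with incident edge set $\delta(v)$ it contains, for every assignment $\boldsymbol\alpha\in\{0,1\}^{\delta(v)}$ with $\sum_{e\in\delta(v)}\alpha_e\not\equiv l_v \pmod 2$, the clause excluding $\boldsymbol\alpha$ (the disjunction of $x_e$ over $e$ with $\alpha_e=0$ and $\bar x_e$ over $e$ with $\alpha_e=1$). Thus $\mathbf{x}\in\{0,1\}^E$ satisfies $\Phi$ iff $\sum_{e\ni v}x_e\equiv l_v \pmod 2$ for all $v$. For a CNF formula with clauses $C_j=\bigvee_{i\in L_j}x_i\vee\bigvee_{i\in\bar L_j}\bar x_i$, its SAT polytope is $\{\mathbf{x}: \sum_{i\in L_j}x_i+\sum_{i\in\bar L_j}(1-x_i)\ge 1\ \forall j,\ 0\le x_i\le 1\ \forall i\}$. Support function: $h_K(\mathbf{a})=\sup_{\mathbf{x}\in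 K}\mathbf{a}\mathbf{x}$, with $h_\emptyset\equiv-\infty$. For $\mathbf{a}\in\mathbb{Z}^n$, $\mathrm{CG}(K,\mathbf{a}) := K\cap\{\mathbf{x}:\mathbf{a}\mathbf{x}\le\lfloor h_K(\mathbf{a})\rfloor\}$ (the Chvátal–Gomory cut induced by $\mathbf{a}$); for a list, $\mathrm{CG}(K,(\mathbf{a}_1,\dots,\mathbf{a}_k)) := \mathrm{CG}(\mathrm{CG}(K,\mathbf{a}_1),(\mathbf{a}_2,\dots,\mathbf{a}_k))$ and $\mathrm{CG}(K,\emptyset)=K$. A cutting plane refutation of length $N$ is a list of $N$ integer vectors $\mathcal{L}$ with $\mathrm{CG}(K,\mathcal{L})=\emptyset$. *)

From HB Require Import structures.
From mathcomp Require Import all_boot all_order all_algebra.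
From mathcomp Require Import all_classical all_reals.
From mathcomp Require Import exp.
Set Implicit Arguments. Unset Strict Implicit. Unset Printing Implicit Defensive.
Import Order.TTheory GRing.Theory Num.Theory.
Local Open Scope ring_scope.

Definition simple_graph (V : finType) (adj : rel V) : Prop :=
  symmetric adj /\ irreflexive adj.

Definition is_edge (V : finType) (adj : rel V) (s : {set V}) : bool :=
  [exists u, exists v, adj u v && (s == [set u; v])].

Definition edge (V : finType) (adj : rel V) : finType :=
  {s : {set V} | is_edge adj s}.

Definition incident (V : finType) (adj : rel V) (v : V) : {set edge adj} :=
  [set e : edge adj | v \in val e].

Definition degree (V : finType) (adj : rel V) (v : V) : nat :=
  #|incident adj v|.

Definition max_degree (V : finType) (adj : rel V) : nat :=
  (\max_(v : V) degree adj v)%N.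

(* A clause over variables indexed by the finite type I: (L, Lbar), i.e.
   the disjunction of x_i (i in L) and of the negations of x_i (i in Lbar).
   A CNF formula is a finite set of clauses. *)
Definition clause (I : finType) := ({set I} * {set I})%type.
Definition cnf (I : finType) := {set clause I}.

(* An assignment alpha in {0,1}^{delta(v)} is represented by the set
   A = {e in delta(v) | alpha_e = 1}; sum alpha_e = #|A|.  The clause
   excluding alpha has positive literals delta(v) \ A and negative ones A. *)
Definition tseitin (V : finType) (adj : rel V) (l : V -> bool) : cnf (edge adj) :=
  [set C : clause (edge adj) | [exists v : V, exists A : {set edge adj},
     [&& A \subset incident adj v, odd #|A| != l v &
         C == (incident adj v :\: A, A)]]].

Local Open Scope classical_set_scope.

Definition sat_polytope (R : realType) (I : finType) (F : cnf I) : set (I -> R) :=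
  [set x | (forall C, C \in F ->
              1 <= \sum_(i in C.1) x i + \sum_(i in C.2) (1 - x i))
           /\ (forall i, 0 <= x i <= 1)].

Definition dotz (R : realType) (I : finType) (a : I -> int) (x : I -> R) : R :=
  \sum_(i : I) (a i)%:~R * x i.

(* Support function h_K(a) = sup_{x in K} a x.  (For K empty the value is
   irrelevant below, since the cut is intersected with K.) *)
Definition support_fun (R : realType) (I : finType) (K : set (I -> R))
  (a : I -> int) : R :=
  sup [set dotz a x | x in K].

Definition CG (R : realType) (I : finType) (K : set (I -> R)) (a : I -> int)
  : set (I -> R) :=
  [set x | K x /\ dotz a x <= (Num.floor (support_fun K a))%:~R].

Definition CG_list (R : realType) (I : finType) (K : set (I -> R))
  (L : seq (I -> int)) : set (I -> R) :=
  foldl (@CG R I) K L.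

(* Cutting planes are studied inside the unit cube [0,1]^E, viewed as a
   compact subset of R^E.  The central fact is the face lemma [cut_face]:
   if [a x <= k] is valid on a closed part B of the cube and the face
   [a x = k] of B has a refutation of length N, then N + 1 cuts derive
   [a x <= k - 1] on B.  Its proof rotates each cut [c] of the face into a
   cut [c + n a] of B ([cut_rotate]), with [n] supplied by the compactness
   argument [penalty_bound].  Iterating it over the values of an integer
   form [0 <= a x <= h] gives branching ([refute_by_slices]): refute every
   slice [a x = k] and pay one extra cut per slice.

   For the Tseitin polytope K, the slice of K where the boundary of a vertex
   set T carries a value of the wrong parity is refuted by divide and
   conquer ([refute_slice]): split T into halves T1, T2, branch on the
   boundary value of T1 and on the number of T1-T2 edges, which fixes the
   boundary value of T2; one half always has the wrong parity.  Single
   vertices are refuted by branching on their edges.  With T = V (empty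
   boundary, odd total charge) after log n halvings this refutes K in
   2^Delta (n Delta)^O(log n) steps; the final bound is arithmetic. *)
From HB Require Import structures.
From mathcomp Require Import all_boot all_order all_algebra.
From mathcomp Require Import all_classical all_reals.
From mathcomp Require Import exp.
From mathcomp Require Import topology normedtype.
From mathcomp Require Import ring lra zify.
Import Order.TTheory GRing.Theory Num.Theory.
Import numFieldNormedType.Exports.
Import ArrowAsProduct.
Set Implicit Arguments. Unset Strict Implicit. Unset Printing Implicit Defensive.
Local Open Scope ring_scope.
Local Open Scope classical_set_scope.

Section Cube.
Variables (R : realType) (E : finType).

(* [E -> R] with the product topology (and a base point, as required by the
   finite-intersection characterisation of compactness). *)
Definition rvec := E -> R.
HB.instance Definition _ := Topological.on rvec.
HB.instance Definition _ := isPointed.Build rvec (fun _ => 0).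

Definition cube : set (E -> R) := [set x | forall i, 0 <= x i <= 1].

Lemma sum_continuous (s : seq E) (P : pred E) (f : E -> rvec -> R) :
  (forall i, continuous (f i)) ->
  continuous (fun x : rvec => \sum_(i <- s | P i) f i x).
Proof.
move=> fc; elim: s => [|i s IH].
  under eq_fun do rewrite big_nil; exact: cst_continuous.
under eq_fun do rewrite big_cons.
case: (P i); last exact: IH.
by move=> x; apply: continuousD; [apply: fc | apply: IH].
Qed.

Lemma coord_continuous (i : E) : continuous (fun x : rvec => x i).
Proof. exact: (@proj_continuous E (fun _ => R) i). Qed.

Lemma dotz_continuous (a : E -> int) : continuous (fun x : rvec => dotz a x).
Proof.
apply: sum_continuous => i x; apply: continuousM; first exact: cst_continuous.
exact: coord_continuous.
Qed.

Lemma closed_superlevel (f : rvec -> R) (g : R) : continuous f ->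
  closed [set x : rvec | g <= f x].
Proof.
move=> fc; apply: (@preimage_closed _ _ f [set y | g <= y]); last exact: closed_ge.
by move=> x _; apply: fc.
Qed.

Lemma closed_dotz_le (a : E -> int) (t : R) :
  closed ([set x | dotz a x <= t] : set rvec).
Proof.
apply: (@preimage_closed _ _ (dotz a) [set y | y <= t]); last exact: closed_le.
by move=> x _; apply: dotz_continuous.
Qed.

Lemma closed_dotz_eq (a : E -> int) (t : R) :
  closed ([set x | dotz a x = t] : set rvec).
Proof.
apply: (@preimage_closed _ _ (dotz a) [set y | y = t]); last exact: closed_eq.
by move=> x _; apply: dotz_continuous.
Qed.

Lemma cube_closed : closed (cube : set rvec).
Proof.
have -> : (cube : set rvec) = \bigcap_(i in [set: E])
    ([set x : rvec | 0 <= x i] `&` [set x : rvec | 0 <= 1 - x i]).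
  apply/seteqP; split => x /= H i.
    by have /andP[? ?] := H i => _; split => //=; rewrite subr_ge0.
  by have [? ?] := H i I; apply/andP; split => //; rewrite -subr_ge0.
apply: closed_bigI => i _; apply: closedI; apply: closed_superlevel.
  exact: coord_continuous.
by move=> x; apply: continuousB; [apply: cst_continuous | apply: coord_continuous].
Qed.

Lemma cube_compact : compact (cube : set rvec).
Proof.
have -> : (cube : set rvec) = [set f | forall i : E, `[(0:R), 1] (f i)].
  by apply: funext => f; apply: propext; split => H i; move: (H i); rewrite /= in_itv.
exact: (@tychonoff E (fun _ => R) (fun _ => `[0, 1]) (fun _ => @segment_compact R 0 1)).
Qed.

Lemma dotz_cube_le (a : E -> int) (x : E -> R) :
  cube x -> dotz a x <= \sum_i `|(a i)%:~R : R|.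
Proof.
move=> cx; apply: ler_sum => i _; apply: le_trans (ler_norm _) _.
have /andP[x0 x1] := cx i.
by rewrite normrM -[X in _ <= X]mulr1 ler_wpM2l // ger0_norm.
Qed.

Lemma cube_nested_nonempty (F : nat -> set rvec) :
  (forall n, closed (F n)) -> (forall n, F n `<=` cube) ->
  (forall m n, (m <= n)%N -> F n `<=` F m) -> (forall n, F n !=set0) ->
  \bigcap_(n in [set: nat]) F n !=set0.
Proof.
move=> Fcl Fcube Fdec Fne.
move: cube_compact; rewrite compact_In0 => /(_ nat setT F); apply.
  exists F => [n _|n _]; first exact: Fcl.
  by rewrite setIidr //; apply: Fcube.
move=> D _; pose N := (\max_(i <- finmap.enum_fset D) i)%N.
have [x Fx] := Fne N; exists x => i iD; apply: Fdec Fx.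
exact: leq_bigmax_seq.
Qed.

Lemma penalty_bound (B : set (E -> R)) (a c : E -> int) (k g0 g1 : R) :
  closed (B : set rvec) -> B `<=` cube ->
  (forall x, B x -> dotz a x <= k) ->
  (forall x, B x -> dotz a x = k -> dotz c x <= g0) -> g0 < g1 ->
  exists n : nat, forall x, B x -> dotz c x + n%:R * (dotz a x - k) <= g1.
Proof.
move=> Bcl Bcube Ha Hc g01; apply: contrapT => Hn.
pose pen (n : nat) (x : E -> R) := dotz c x + n%:R * (dotz a x - k).
pose F n := [set x : rvec | B x /\ g1 <= pen n x].
have Fne n : F n !=set0.
  apply: contrapT => Fn0; apply: Hn; exists n => x Bx.
  by rewrite leNgt; apply/negP => lt; apply: Fn0; exists x; split => //; apply: ltW.
have Fcl n : closed (F n).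
  apply: closedI => //; apply: closed_superlevel => x.
  apply: continuousD; first exact: dotz_continuous.
  apply: continuousM; first exact: cst_continuous.
  by apply: continuousB; [apply: dotz_continuous | apply: cst_continuous].
have Fdec m n : (m <= n)%N -> F n `<=` F m.
  move=> mn x [Bx Hx]; split => //; apply: le_trans Hx _.
  by rewrite lerD2l ler_wnM2r ?ler_nat // subr_le0 Ha.
have [p Fp] := cube_nested_nonempty Fcl (fun n x Fx => Bcube x Fx.1) Fdec Fne.
have [Bp g1p] := Fp 0%N I; rewrite /pen mul0r addr0 in g1p.
have [apk|apk] := eqVneq (dotz a p) k.
  by have := lt_le_trans g01 g1p; rewrite ltNge Hc.
have slack : 0 < k - dotz a p by rewrite subr_gt0 lt_neqAle apk Ha.
set C := \sum_i `|(c i)%:~R : R|.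
have [n Hn'] : exists n : nat, (C - g1) / (k - dotz a p) < n%:R.
  by exists (Num.truncn ((C - g1) / (k - dotz a p))).+1; apply: truncnS_gt.
have [_ g1n] := Fp n I; have cC : dotz c p <= C := dotz_cube_le c (Bcube p Bp).
rewrite ltr_pdivrMr // in Hn'; rewrite /pen in g1n; nra.
Qed.
End Cube.

Section ChvatalGomory.
Variables (R : realType) (E : finType).
Local Notation rvec := (rvec R E).
Local Notation cube := (@cube R E).

(* Upper and lower estimates of the support function on subsets of the
   cube, where it is a genuine supremum of a bounded set. *)
Lemma support_fun_ge (P : set (E -> R)) (a : E -> int) (x : E -> R) :
  P `<=` cube -> P x -> dotz a x <= support_fun P a.
Proof.
move=> Pcube Px; apply: ub_le_sup; last by exists x.
by exists (\sum_i `|(a i)%:~R : R|) => _ [y Py <-]; apply/dotz_cube_le/Pcube.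
Qed.

Lemma support_fun_le (P : set (E -> R)) (a : E -> int) (b : R) :
  P !=set0 -> (forall x, P x -> dotz a x <= b) -> support_fun P a <= b.
Proof.
move=> [x Px] Hb; apply: ge_sup; first by exists (dotz a x), x.
by move=> _ [y Py <-]; apply: Hb.
Qed.

Lemma CG_subset (P : set (E -> R)) (a : E -> int) : CG P a `<=` P.
Proof. by move=> x []. Qed.

Lemma CG_monotone (P Q : set (E -> R)) (a : E -> int) :
  P `<=` Q -> Q `<=` cube -> CG P a `<=` CG Q a.
Proof.
move=> PQ Qcube x [Px Hx]; split; first exact: PQ.
apply: le_trans Hx _; rewrite ler_int; apply: le_floor.
apply: support_fun_le; first by exists x.
by move=> y Py; apply: support_fun_ge => //; apply: PQ.
Qed.

Lemma CG_closed (P : set (E -> R)) (a : E -> int) :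
  closed (P : set rvec) -> closed (CG P a : set rvec).
Proof. by move=> Pcl; apply: closedI => //; apply: closed_dotz_le. Qed.

Lemma CG_list_subset (P : set (E -> R)) (L : seq (E -> int)) :
  CG_list P L `<=` P.
Proof. by elim: L P => [|a L IH] P //= x /IH /CG_subset. Qed.

Lemma CG_list_monotone (P Q : set (E -> R)) (L : seq (E -> int)) :
  P `<=` Q -> Q `<=` cube -> CG_list P L `<=` CG_list Q L.
Proof.
elim: L P Q => [|a L IH] P Q PQ Qcube //=; apply: IH; first exact: CG_monotone.
by move=> x /CG_subset /Qcube.
Qed.

Lemma CG_list_cat (P : set (E -> R)) (L1 L2 : seq (E -> int)) :
  CG_list P (L1 ++ L2) = CG_list (CG_list P L1) L2.
Proof. exact: foldl_cat. Qed.

Lemma CG_list_closed (P : set (E -> R)) (L : seq (E -> int)) :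
  closed (P : set rvec) -> closed (CG_list P L : set rvec).
Proof. by elim: L P => [|a L IH] P Pcl //=; apply/IH/CG_closed. Qed.

Definition refutable (P : set (E -> R)) (N : nat) : Prop :=
  exists L : seq (E -> int), (size L <= N)%N /\ CG_list P L = set0.

Lemma refutable_subset (P Q : set (E -> R)) (N : nat) :
  P `<=` Q -> Q `<=` cube -> refutable Q N -> refutable P N.
Proof.
move=> PQ Qcube [L [sL QL]]; exists L; split => //.
by rewrite -subset0 -QL; apply: CG_list_monotone.
Qed.

Lemma refutable_weaken (P : set (E -> R)) (N N' : nat) :
  (N <= N')%N -> refutable P N -> refutable P N'.
Proof. by move=> NN' [L [sL PL]]; exists L; split => //; apply: leq_trans NN'. Qed.

Definition face (P : set (E -> R)) (a : E -> int) (k : R) : set (E -> R) :=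
  P `&` [set x | dotz a x = k].

Lemma face_closed (P : set (E -> R)) (a : E -> int) (k : R) :
  closed (P : set rvec) -> closed (face P a k : set rvec).
Proof. by move=> Pcl; apply: closedI => //; apply: closed_dotz_eq. Qed.

Lemma face_subset (P : set (E -> R)) (a : E -> int) (k : R) : face P a k `<=` P.
Proof. by move=> x []. Qed.

Lemma dotz_comb (c a : E -> int) (n : nat) (x : E -> R) :
  dotz (fun i => c i + n%:Z * a i) x = dotz c x + n%:R * dotz a x.
Proof.
rewrite /dotz mulr_sumr -big_split; apply: eq_bigr => i _ /=.
by rewrite intrD intrM mulrDl mulrA.
Qed.

Lemma dotz0 (x : E -> R) : dotz (fun=> 0) x = 0.
Proof. by rewrite /dotz big1 // => i _; rewrite mul0r. Qed.

(* If the face [a x = k] of [B] is empty, the single cut [a] already pushes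
   the valid inequality [a x <= k] down to [a x <= k - 1]: by
   [penalty_bound], [a x] stays a positive distance below [k] on B. *)
Lemma cut_empty_face (B : set (E -> R)) (a : E -> int) (k : int) :
  closed (B : set rvec) -> B `<=` cube -> (forall x, B x -> dotz a x <= k%:~R) ->
  face B a k%:~R = set0 -> CG B a `<=` [set x | dotz a x <= (k - 1)%:~R].
Proof.
move=> Bcl Bcube Ha B0 x [Bx Hx]; apply: le_trans Hx _; rewrite ler_int.
have no_face y : B y -> dotz a y = k%:~R -> dotz (fun=> 0) y <= -1.
  by move=> By Hy; have : face B a k%:~R y by []; rewrite B0.
have half : (-1 : R) < -(1/2) by lra.
have [n Hn] := penalty_bound Bcl Bcube Ha no_face half.
have n0 : (0 < n)%N.
  by rewrite lt0n; apply/eqP => n0; have := Hn x Bx; rewrite n0 dotz0; lra.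
have np : (0 : R) < n%:R by rewrite ltr0n.
have Hsup : support_fun B a <= k%:~R - 1 / (2 * n%:R).
  apply: support_fun_le; first by exists x.
  move=> y By; have := Hn y By; rewrite dotz0 add0r => Hy.
  rewrite -(ler_pM2l np) mulrBr.
  have -> : n%:R * (1 / (2 * n%:R)) = 1 / 2 :> R by field; rewrite pnatr_eq0 -lt0n.
  lra.
rewrite -ltzD1 subrK floor_lt_int; apply: le_lt_trans Hsup _.
by rewrite ltrBlDr ltrDl divr_gt0 // mulr_gt0.
Qed.

(* Any cut [c] on the face [a x = k] of [B] can be simulated on [B] itself:
   the rotated cut [c + n a], for [n] large, cuts [B] so that its trace on
   the face is contained in the CG cut of the face by [c]. *)
Lemma cut_rotate (B : set (E -> R)) (a c : E -> int) (k : int) :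
  closed (B : set rvec) -> B `<=` cube -> (forall x, B x -> dotz a x <= k%:~R) ->
  exists v : E -> int, face (CG B v) a k%:~R `<=` CG (face B a k%:~R) c.
Proof.
move=> Bcl Bcube Ha.
set F := face B a k%:~R; set g0 := support_fun F c.
set g1 := (g0 + ((Num.floor g0)%:~R + 1)) / 2.
have g0_lt : g0 < (Num.floor g0)%:~R + 1 by rewrite -intrD1 floorD1_gt.
have Fcube : F `<=` cube by move=> x /face_subset /Bcube.
have on_face x : B x -> dotz a x = k%:~R -> dotz c x <= g0.
  by move=> Bx Hx; apply: support_fun_ge.
have g01 : g0 < g1 by rewrite /g1; lra.
have [n Hn] := penalty_bound Bcl Bcube Ha on_face g01.
exists (fun i => c i + n%:Z * a i) => x [[Bx Hv] Hax]; split; first by split.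
have Hsup : support_fun B (fun i => c i + n%:Z * a i) <= g1 + (n%:Z * k)%:~R.
  apply: support_fun_le; first by exists x.
  by move=> y By; rewrite dotz_comb intrM; have := Hn y By; lra.
have Hfloor : Num.floor (support_fun B (fun i => c i + n%:Z * a i))
    <= Num.floor g0 + n%:Z * k.
  apply: le_trans (le_floor Hsup) _.
  rewrite floorDrz ?intr_int // intrKfloor lerD2r.
  by rewrite -ltzD1 floor_lt_int intrD1 /g1; lra.
move: Hv; rewrite dotz_comb Hax => Hv.
have : dotz c x + n%:R * k%:~R <= (Num.floor g0 + n%:Z * k)%:~R.
  by apply: le_trans Hv _; rewrite ler_int.
by rewrite intrD intrM; lra.
Qed.

(* Face lemma: a refutation of the face [a x = k] of [B], prefixed by
   rotated cuts and closed by the cut [a], derives [a x <= k - 1] on [B]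
   at the cost of one extra cut. *)
Lemma cut_face (B : set (E -> R)) (a : E -> int) (k : int) (N : nat) :
  closed (B : set rvec) -> B `<=` cube -> (forall x, B x -> dotz a x <= k%:~R) ->
  refutable (face B a k%:~R) N ->
  exists L, (size L <= N.+1)%N /\
    CG_list B L `<=` [set x | dotz a x <= (k - 1)%:~R].
Proof.
move=> + + + [L [sL FL]]; elim: L B N sL FL => [|c L IH] B N sL FL Bcl Bcube Ha.
  by exists [:: a]; split => //; apply: cut_empty_face.
have [v Hv] := cut_rotate c Bcl Bcube Ha.
have B1cube : CG B v `<=` cube by move=> x /CG_subset /Bcube.
have F1L : CG_list (face (CG B v) a k%:~R) L = set0.
  rewrite -subset0 -FL; apply: CG_list_monotone Hv _.
  by move=> x /CG_subset /face_subset /Bcube.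
have [L' [sL' HL']] := IH _ _ (leqnn _) F1L (CG_closed (a := v) Bcl) B1cube
  (fun x Bx => Ha x (CG_subset Bx)).
by exists (v :: L'); split; [apply: leq_trans sL' sL | apply: HL'].
Qed.

(* Branching on the value of an integer form: if [0 <= a x <= h] on [P] and
   every slice [a x = k] is refutable in [N k] steps, then [P] is refutable
   in [sum_k (N k + 1)] steps, cutting the slices off from the top one
   down with [cut_face]. *)
Lemma refute_by_slices (P : set (E -> R)) (a : E -> int) (h : nat) (N : nat -> nat) :
  closed (P : set rvec) -> P `<=` cube ->
  (forall x, P x -> 0 <= dotz a x <= h%:R) ->
  (forall k, (k <= h)%N -> refutable (face P a k%:R) (N k)) ->
  refutable P (\sum_(k < h.+1) (N k).+1).
Proof.
elim: h P => [|h IH] P Pcl Pcube Pa HN.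
  have [L [sL HL]] := @cut_face P a 0 _ Pcl Pcube
    (fun x Px => (andP (Pa x Px)).2) (HN 0%N (leqnn _)).
  exists L; split; first by rewrite big_ord1.
  rewrite -subset0 => x Lx; have /andP[a0 _] := Pa x (CG_list_subset Lx).
  have := le_trans a0 (HL x Lx); rewrite sub0r (_ : (-1 : int)%:~R = -1 :> R) //.
  lra.
have [L1 [sL1 HL1]] := @cut_face P a h.+1 _ Pcl Pcube
  (fun x Px => (andP (Pa x Px)).2) (HN h.+1 (leqnn _)).
set P1 := CG_list P L1.
have P1P : P1 `<=` P by apply: CG_list_subset.
have [L2 [sL2 HL2]] : refutable P1 (\sum_(k < h.+1) (N k).+1).
  apply: IH; first exact: CG_list_closed.
  - by move=> x /P1P /Pcube.
  - move=> x P1x; have /andP[a0 _] := Pa x (P1P x P1x).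
    by rewrite a0 /=; have := HL1 x P1x; rewrite -[h.+1]addn1 PoszD addrK.
  - move=> k kh; apply: refutable_subset (HN k (leqW kh)).
      by move=> x [/P1P Px Hx]; split.
    by move=> x [/Pcube].
exists (L1 ++ L2); split; last by rewrite CG_list_cat.
by rewrite size_cat big_ord_recr /= addnC leq_add.
Qed.

Definition ind (S : {set E}) : E -> int := fun e => ((e \in S) : nat)%:Z.

Lemma dotz_ind (S : {set E}) (x : E -> R) : dotz (ind S) x = \sum_(e in S) x e.
Proof.
rewrite /dotz (big_mkcond (fun e => e \in S)) /=; apply: eq_bigr => e _.
by rewrite /ind; case: (e \in S); rewrite ?mul1r ?mul0r.
Qed.

Lemma dotz_ind_cube (S : {set E}) (x : E -> R) :
  cube x -> 0 <= dotz (ind S) x <= #|E|%:R.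
Proof.
move=> cx; rewrite dotz_ind; apply/andP; split.
  by apply: sumr_ge0 => e _; have /andP[] := cx e.
apply: (@le_trans _ _ (\sum_(e in S) (1 : R))).
  by apply: ler_sum => e _; have /andP[] := cx e.
by rewrite sumr_const ler_nat max_card.
Qed.

(* A closed part of the cube without 0/1 points on the coordinates [D]
   is refuted by branching on each of these coordinates in turn. *)
Lemma refute_nonintegral (D : seq E) (P : set (E -> R)) :
  closed (P : set rvec) -> P `<=` cube ->
  (forall (alpha : E -> bool) x, P x -> {in D, forall e, x e = (alpha e)%:R} -> False) ->
  refutable P (2 ^ (size D).+1 - 2).
Proof.
elim: D P => [|e D IH] P Pcl Pcube noint.
  exists [::]; split => //; rewrite -subset0 => x Px.
  exact: (noint (fun=> false) x Px).
have -> : (2 ^ (size (e :: D)).+1 - 2 = \sum_(k < 2) (2 ^ (size D).+1 - 2).+1)%N.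
  rewrite big_ord_recr big_ord1 /= [(2 ^ _.+2)%N]expnS.
  have : (2 <= 2 ^ (size D).+1)%N by rewrite expnS leq_pmulr ?expn_gt0.
  lia.
apply: (refute_by_slices (a := ind [set e]) (h := 1)
  (N := fun=> (2 ^ (size D).+1 - 2)%N)) => //.
  by move=> x Px; rewrite dotz_ind big_set1; have /andP[-> ->] := Pcube x Px e.
move=> k k1; apply: IH; first exact: face_closed.
  by move=> x /face_subset /Pcube.
move=> alpha x [Px xe] Halpha; rewrite /= dotz_ind big_set1 in xe.
have bitk : (k%:R : R) = (k == 1%N)%:R by case: k k1 {xe} => [|[|]].
apply: (noint (fun e' => if e' == e then k == 1%N else alpha e') x Px) => e'.
rewrite inE => /orP[/eqP ->|e'D]; first by rewrite eqxx xe bitk.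
by case: eqP => [->|_]; [rewrite xe bitk | apply: Halpha].
Qed.
End ChvatalGomory.

Section Graph.
Variables (V : finType) (adj : rel V).
Hypothesis adj_simple : simple_graph adj.

Lemma edge_card (e : edge adj) : #|val e| = 2%N.
Proof.
have := valP e; rewrite /is_edge => /existsP [u /existsP [v /andP [uv /eqP ->]]].
by rewrite cards2; case: eqP uv => // ->; case: adj_simple => _ ->.
Qed.

Lemma degree_le_max (v : V) : (degree adj v <= max_degree adj)%N.
Proof. exact: (@leq_bigmax _ (fun v => degree adj v)). Qed.

(* Handshake bound: every edge is counted twice among the degrees. *)
Lemma edge_count_le : (#|edge adj| <= #|V| * max_degree adj)%N.
Proof.
have handshake : (\sum_(v : V) degree adj v = 2 * #|edge adj|)%N.
  transitivity (\sum_(v : V) \sum_(e : edge adj) ((v \in val e) : nat))%N.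
    apply: eq_bigr => v _; rewrite /degree -sum1_card big_mkcond /=.
    by apply: eq_bigr => e _; rewrite inE; case: (v \in val e).
  rewrite exchange_big /= (eq_bigr (fun=> 2%N)) => [|e _]; last first.
    rewrite -(edge_card e) -sum1_card [RHS]big_mkcond /=.
    by apply: eq_bigr => v _; case: (v \in val e).
  by rewrite sum_nat_const mulnC.
have : (\sum_(v : V) degree adj v <= \sum_(v : V) max_degree adj)%N.
  by apply: leq_sum => v _; apply: degree_le_max.
rewrite handshake sum_nat_const => h; apply: leq_trans h; lia.
Qed.

Lemma two_vertices : (0 < max_degree adj)%N -> (1 < #|V|)%N.
Proof.
move=> Dpos; have [w Hw|none] := pickP (fun w => 0 < degree adj w)%N; last first.
  move: Dpos; rewrite /max_degree big1 // => u _.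
  by apply/eqP; rewrite -leqn0 leqNgt none.
move: Hw; rewrite /degree card_gt0 => /set0Pn [e _].
by rewrite -cardsT -(edge_card e) subset_leq_card // finset.subsetT.
Qed.
End Graph.

Section Tseitin.
Variables (R : realType) (V : finType) (adj : rel V) (l : V -> bool).
Hypothesis adj_simple : simple_graph adj.
Local Notation E := (edge adj).
Local Notation rvec := (rvec R E).
Local Notation cube := (@cube R E).
Local Notation K := (@sat_polytope R E (tseitin adj l)).

Lemma tseitin_cube : K `<=` cube.
Proof. by move=> x []. Qed.

Lemma tseitin_closed : closed (K : set rvec).
Proof.
have -> : (K : set rvec) = cube `&` \bigcap_(C in [set C | C \in tseitin adj l])
   [set x : rvec | 1 <= \sum_(i in C.1) x i + \sum_(i in C.2) (1 - x i)].
  apply/seteqP; split => x [H1 H2].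
    by split => // C; apply: H1.
  by split => // C; apply: H2.
apply: closedI; first exact: cube_closed.
apply: closed_bigI => C _; apply: closed_superlevel => x.
apply: continuousD; first by apply: sum_continuous => i; apply: coord_continuous.
apply: (@sum_continuous R E _ _ (fun i x => 1 - x i)) => i y.
by apply: continuousB; [apply: cst_continuous | apply: coord_continuous].
Qed.

Definition boundary (T : {set V}) : {set E} := [set e : E | #|val e :&: T| == 1%N].
Definition crossing (T1 T2 : {set V}) : {set E} :=
  [set e : E | (#|val e :&: T1| == 1%N) && (#|val e :&: T2| == 1%N)].

(* The total charge of [T]; Tseitin constraints force every 0/1 point of K
   to have [sum_(e in boundary T) x e = charge T] modulo 2. *)
Definition charge (T : {set V}) : nat := (\sum_(v in T) (l v : nat))%N.
Definition wrong_parity (T : {set V}) (k : int) : Prop :=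
  ((k - (charge T)%:Z) %% 2)%Z = 1.

Definition slice (T : {set V}) (k : int) : set (E -> R) :=
  face K (ind (boundary T)) k%:~R.

Lemma slice_closed (T : {set V}) (k : int) : closed (slice T k : set rvec).
Proof. exact/face_closed/tseitin_closed. Qed.

Lemma slice_cube (T : {set V}) (k : int) : slice T k `<=` cube.
Proof. by move=> x /face_subset /tseitin_cube. Qed.

Lemma charge_union (T1 T2 : {set V}) : T1 :&: T2 = finset.set0 ->
  charge (T1 :|: T2) = (charge T1 + charge T2)%N.
Proof.
move=> dis; rewrite /charge (eq_bigl [predU T1 & T2]) => [|v]; last by rewrite !inE.
by rewrite bigU // -setI_eq0 dis.
Qed.

Lemma boundary1 (v : V) : boundary [set v]%SET = incident adj v.
Proof.
apply/setP => e; rewrite !inE; case: (boolP (v \in val e)) => ve.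
  suff -> : val e :&: [set v]%SET = [set v]%SET by rewrite cards1.
  by apply/finset.setIidPr; rewrite finset.sub1set.
suff -> : val e :&: [set v]%SET = finset.set0 by rewrite cards0.
apply/setP => y; rewrite !inE.
by case: (y =P v) => [->|_]; rewrite ?(negbTE ve) ?andbF.
Qed.

Lemma boundaryT : boundary [set: V]%SET = finset.set0.
Proof. by apply/setP => e; rewrite !inE finset.setIT (edge_card adj_simple). Qed.

Lemma boundary_union (T1 T2 : {set V}) (x : E -> R) : T1 :&: T2 = finset.set0 ->
  dotz (ind (boundary T1)) x + dotz (ind (boundary T2)) x =
  dotz (ind (boundary (T1 :|: T2))) x + 2 * dotz (ind (crossing T1 T2)) x.
Proof.
move=> dis; rewrite /dotz mulr_sumr -!big_split; apply: eq_bigr => e _ /=.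
have card_union : #|val e :&: (T1 :|: T2)| = (#|val e :&: T1| + #|val e :&: T2|)%N.
  rewrite finset.setIUr cardsU finset.setIACA finset.setIid dis finset.setI0.
  by rewrite cards0 subn0.
have : (#|val e :&: T1| + #|val e :&: T2| <= 2)%N.
  by rewrite -card_union -(edge_card adj_simple e) subset_leq_card ?finset.subsetIl.
rewrite /ind !inE card_union.
case: #|val e :&: T1| => [|[|[|p]]]; case: #|val e :&: T2| => [|[|[|q]]] //= _;
  rewrite ?mul0r ?mul1r ?addr0 ?add0r ?mulr0 ?mulr1 //; lra.
Qed.

(* A point of K which is 0/1 on the edges at [v] satisfies the parity
   constraint at [v]: otherwise it violates the clause excluding its own
   restriction to these edges. *)
Lemma tseitin_point_parity (v : V) (alpha : E -> bool) (x : E -> R) :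
  K x -> {in incident adj v, forall e, x e = (alpha e)%:R} ->
  odd #|[set e in incident adj v | alpha e]| = l v.
Proof.
move=> [Kclause _] Hx; set A := [set e in incident adj v | alpha e].
apply/eqP/negPn/negP => par.
have A_clause : (incident adj v :\: A, A) \in tseitin adj l.
  rewrite inE; apply/existsP; exists v; apply/existsP; exists A.
  apply/and3P; split => //.
  by apply/fintype.subsetP => e; rewrite inE => /andP[].
have := Kclause _ A_clause; rewrite /= big1 => [|e]; last first.
  rewrite [e \in _ :\: _]inE => /andP[nA eI]; rewrite Hx //.
  by move: nA; rewrite [e \in A]inE eI /= => /negbTE ->.
rewrite add0r big1 ?ler10 // => e; rewrite [e \in A]inE => /andP[eI ae].
by rewrite Hx // ae subrr.
Qed.

Lemma sum_incident_bits (v : V) (alpha : E -> bool) (x : E -> R) :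
  {in incident adj v, forall e, x e = (alpha e)%:R} ->
  \sum_(e in incident adj v) x e = #|[set e in incident adj v | alpha e]|%:R.
Proof.
move=> Hx; rewrite (bigID alpha) /= [X in _ + X]big1 => [|e /andP[eI /negbTE na]].
  rewrite addr0 -sumr_const; apply: eq_big => [e|e /andP[eI ae]]; first by rewrite !inE.
  by rewrite Hx // ae.
by rewrite Hx // na.
Qed.

(* Base case: a single vertex slice of the wrong parity has no 0/1 point
   on the edges at [v], so branching on these edges refutes it. *)
Lemma refute_vertex_slice (v : V) (k : int) : wrong_parity [set v]%SET k ->
  refutable (slice [set v]%SET k) (2 ^ (degree adj v).+1 - 2).
Proof.
move=> par; rewrite /degree cardE.
apply: refute_nonintegral; [exact: slice_closed | exact: slice_cube |].
move=> alpha x [Kx Hx] Halpha.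
have Hv : {in incident adj v, forall e, x e = (alpha e)%:R}.
  by move=> e eI; apply: Halpha; rewrite mem_enum.
move: Hx; rewrite /= boundary1 dotz_ind (sum_incident_bits Hv) => Hx.
have kA : k = #|[set e in incident adj v | alpha e]|%:Z.
  by apply: (@intr_inj R); rewrite -Hx.
move: par; rewrite /wrong_parity /charge big_set1 kA -(tseitin_point_parity Kx Hv).
lia.
Qed.

Lemma slice_boundary0 (T : {set V}) : boundary T = finset.set0 -> slice T 0 = K.
Proof.
move=> bT0; apply/seteqP; split => [x [] //|x Kx]; split => //.
by rewrite /= bT0 dotz_ind big_set0.
Qed.

(* Splitting step: slices of a disjoint union [T1 :|: T2] of the wrong
   parity are refuted by branching first on the boundary value [j] of [T1]
   (a wrong-parity slice of [T1] when [j] has the wrong parity) and then on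
   the crossing value [j'], which determines the boundary value of [T2]
   to be [k + 2 j' - j], of the wrong parity for [T2]. *)
Lemma refute_slice_split (T1 T2 : {set V}) (N : nat) : T1 :&: T2 = finset.set0 ->
  (forall k, wrong_parity T1 k -> refutable (slice T1 k) N) ->
  (forall k, wrong_parity T2 k -> refutable (slice T2 k) N) ->
  forall k, wrong_parity (T1 :|: T2) k ->
  refutable (slice (T1 :|: T2) k) (#|E|.+1 * (#|E|.+1 * N.+1).+1).
Proof.
move=> dis H1 H2 k par.
have branch_sum m : (#|E|.+1 * m.+1 = \sum_(j < #|E|.+1) m.+1)%N.
  by rewrite sum_nat_const card_ord.
rewrite branch_sum; apply: (refute_by_slices (a := ind (boundary T1)) (h := #|E|)
  (N := fun=> (#|E|.+1 * N.+1)%N)); [exact: slice_closed | exact: slice_cube | |].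
  by move=> x /slice_cube; apply: dotz_ind_cube.
move=> j _; case: (boolP ((j%:Z - (charge T1)%:Z) %% 2 == 1)%Z) => [/eqP par1|par1].
  apply: refutable_weaken (_ : N <= _)%N _; first by nia.
  by apply: refutable_subset (H1 _ par1) => [x [[Kx _] Hx]|]; [split | apply: slice_cube].
rewrite branch_sum; apply: (refute_by_slices (a := ind (crossing T1 T2)) (h := #|E|)
  (N := fun=> N)); [exact/face_closed/slice_closed | | |].
- by move=> x /face_subset /slice_cube.
- by move=> x /face_subset /slice_cube; apply: dotz_ind_cube.
move=> j' _; apply: refutable_subset (H2 (k + 2 * j'%:Z - j%:Z) _); last first.
- by move: par par1; rewrite /wrong_parity charge_union //; lia.
- exact: slice_cube.
move=> x [[[Kx HxT] Hx1] Hx']; split => //=.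
have := boundary_union x dis; rewrite /= in HxT Hx1 Hx'; rewrite HxT Hx1 Hx'.
by rewrite !intrD intrM; lra.
Qed.

Lemma halve_set (T : {set V}) : exists T1 T2 : {set V},
  [/\ T1 :&: T2 = finset.set0, T1 :|: T2 = T,
      #|T1| = (#|T| %/ 2)%N & #|T2| = (#|T| - #|T| %/ 2)%N].
Proof.
pose T1 := [set x in take (#|T| %/ 2) (enum T)].
have T1T : T1 \subset T.
  by apply/fintype.subsetP => x; rewrite inE => /mem_take; rewrite mem_enum.
have cT1 : #|T1| = (#|T| %/ 2)%N.
  rewrite cardsE; move/card_uniqP: (take_uniq (#|T| %/ 2) (enum_uniq (mem T))) => ->.
  by rewrite size_takel // -cardE leq_div.
exists T1, (T :\: T1); split => //.
- by rewrite finset.setDE finset.setICA finset.setICr finset.setI0.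
- apply/setP => x; rewrite finset.in_setU finset.in_setD.
  by case: (boolP (x \in T1)) => //= x1; rewrite (fintype.subsetP T1T _ x1).
- by rewrite cardsD (finset.setIidPr T1T) cT1.
Qed.

(* Length budget for slices of sets with at most [2 ^ d] vertices. *)
Definition budget (d : nat) : nat :=
  (2 ^ (max_degree adj).+2 * (3 * #|E|.+1 ^ 2) ^ d)%N.

Lemma budget_ge1 (d : nat) : (1 <= budget d)%N.
Proof. by rewrite muln_gt0 !expn_gt0. Qed.

Lemma budget_mono (d : nat) : (budget d <= budget d.+1)%N.
Proof.
by rewrite /budget leq_mul // [X in (_ <= X)%N]expnS leq_pmull // muln_gt0 expn_gt0.
Qed.

Lemma budget_split (d : nat) :
  (#|E|.+1 * (#|E|.+1 * (budget d).+1).+1 <= budget d.+1)%N.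
Proof.
have b1 := budget_ge1 d.
have -> : budget d.+1 = (3 * #|E|.+1 ^ 2 * budget d)%N.
  by rewrite /budget (expnS (3 * _)) mulnCA.
rewrite expnS expn1; nia.
Qed.

Lemma budget_vertex (v : V) : (2 ^ (degree adj v).+1 - 2 <= budget 0)%N.
Proof.
rewrite /budget expn0 muln1; apply: leq_trans (leq_subr _ _) _.
by rewrite leq_exp2l //; apply: leqW; rewrite ltnS degree_le_max.
Qed.

Lemma refute_slice (d : nat) (T : {set V}) (k : int) :
  (0 < #|T| <= 2 ^ d)%N -> wrong_parity T k -> refutable (slice T k) (budget d).
Proof.
elim: d T k => [|d IH] T k /andP[T0 Td] par.
  have /cards1P [v Tv] : #|T| == 1%N by rewrite eqn_leq Td T0.
  rewrite Tv in par *; apply: refutable_weaken (budget_vertex v) _.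
  exact: refute_vertex_slice.
have [small|big] := leqP #|T| (2 ^ d).
  by apply: refutable_weaken (budget_mono d) _; apply: IH => //; rewrite T0.
have [T1 [T2 [dis TU c1 c2]]] := halve_set T.
have pow_pos : (0 < 2 ^ d)%N := expn_gt0 2 d.
rewrite expnS in Td.
have /IH IH1 : (0 < #|T1| <= 2 ^ d)%N by rewrite c1; apply/andP; split; lia.
have /IH IH2 : (0 < #|T2| <= 2 ^ d)%N by rewrite c2; apply/andP; split; lia.
rewrite -TU in par *; apply: refutable_weaken (budget_split d) _.
exact: refute_slice_split.
Qed.

Lemma odd_charge_vertex : odd (\sum_(v : V) (l v : nat)) -> exists v, l v.
Proof.
move=> odd_l; apply: contrapT => no_v; move: odd_l; rewrite big1 // => u _.
by case: (boolP (l u)) => // lu; case: no_v; exists u.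
Qed.

Lemma tseitin_refutation (d : nat) : odd (\sum_(v : V) (l v : nat)) ->
  (#|V| <= 2 ^ d)%N -> exists L : seq (E -> int),
    CG_list K L = set0 /\ (size L <= budget d)%N.
Proof.
move=> odd_l Vd; have [v _] := odd_charge_vertex odd_l.
have chargeT : charge [set: V]%SET = (\sum_(v : V) (l v : nat))%N.
  by apply: eq_bigl => u; rewrite inE.
have V0 : (0 < #|[set: V]%SET|)%N by apply/card_gt0P; exists v; rewrite inE.
have [L [sL KL]] : refutable K (budget d).
  rewrite -(slice_boundary0 boundaryT); apply: refute_slice.
    by rewrite V0 cardsT.
  by rewrite /wrong_parity chargeT; move: odd_l; lia.
by exists L.
Qed.

Lemma isolated_odd_vertex (v : V) : l v -> degree adj v = 0%N -> K = set0.
Proof.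
move=> lv deg0.
have inc0 : incident adj v = finset.set0 by apply/eqP; rewrite -cards_eq0; apply/eqP.
have [L [sL KL]] : refutable (slice [set v]%SET 0) (2 ^ (degree adj v).+1 - 2).
  by apply: refute_vertex_slice; rewrite /wrong_parity /charge big_set1 lv.
by move: sL KL; rewrite deg0 leqn0 size_eq0 => /eqP -> /=; rewrite slice_boundary0 // boundary1.
Qed.
End Tseitin.

Lemma budget_arith (D m X t : nat) : (2 <= X)%N -> (m <= X)%N ->
  (2 ^ D.+2 * (3 * m.+1 ^ 2) ^ t.+1 <= 2 ^ D * X ^ (6 * t + 8))%N.
Proof.
move=> X2 mX.
have X2sq : (4 <= X ^ 2)%N by rewrite (leq_exp2r 2 X (ltn0Sn 1)) in X2 *.
have base : (3 * m.+1 ^ 2 <= X ^ 6)%N.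
  have : (m.+1 ^ 2 <= 4 * X ^ 2)%N.
    by rewrite (_ : 4 = 2 ^ 2)%N // -expnMn leq_exp2r //; lia.
  have X4 : (16 <= X ^ 2 * X ^ 2)%N by apply: (leq_mul X2sq X2sq).
  rewrite (_ : X ^ 6 = X ^ 2 * X ^ 2 * X ^ 2)%N -?expnD //; nia.
have powers : ((3 * m.+1 ^ 2) ^ t.+1 <= X ^ (6 * t.+1))%N.
  by rewrite expnM leq_exp2r.
rewrite (_ : 2 ^ D.+2 = 4 * 2 ^ D)%N; last by rewrite !expnS mulnA.
rewrite (_ : 6 * t + 8 = 2 + 6 * t.+1)%N ?expnD; last by lia.
by rewrite -mulnA mulnCA leq_mul // leq_mul.
Qed.

(* [ln 2 >= 1/2], from [ln (1 + x) <= x] at [x = -1/2]. *)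
Lemma ln2_ge_half (R : realType) : (1 / 2 : R) <= ln 2.
Proof.
have h : ln (1 + - (1 / 2)) <= - (1 / 2) :> R by apply: le_ln1Dx; lra.
rewrite (_ : 1 + - (1 / 2) = (2 : R)^-1) ?lnV ?posrE // in h; last by field.
lra.
Qed.

(* [X ^ (6 t + 8) <= X ^ (28 ln n)] as soon as [2 ^ t <= n] and [n >= 2],
   since [ln n] is at least [t / 2] and at least [1 / 2]. *)
Lemma pow_le_powR_ln (R : realType) (X n t : nat) :
  (1 <= X)%N -> (2 <= n)%N -> (2 ^ t <= n)%N ->
  (X ^ (6 * t + 8))%:R <= (X%:R : R) `^ (28%:R * ln n%:R).
Proof.
move=> X1 n2 tn; rewrite natrX -powR_mulrn // ler_powR ?ler1n //.
have n0 : (0 : R) < n%:R by rewrite ltr0n; lia.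
have ln2n : ln (2 : R) <= ln n%:R by rewrite ler_ln ?posrE // ler_nat.
have tln : t%:R * ln (2 : R) <= ln n%:R.
  rewrite mulr_natl -lnXn // -natrX ler_ln ?posrE ?ler_nat //.
  by rewrite ltr0n expn_gt0.
have l2 := @ln2_ge_half R.
have : t%:R * (1 / 2) <= t%:R * ln (2 : R) :> R by rewrite ler_wpM2l.
rewrite natrD natrM; lra.
Qed.

Theorem theorem1p3 :
  exists c : nat,
  forall (R : realType) (V : finType) (adj : rel V) (l : V -> bool),
    simple_graph adj ->
    odd (\sum_(v : V) (l v : nat))%N ->
    exists L : seq (edge adj -> int),
      CG_list (@sat_polytope R _ (tseitin adj l)) L = set0 /\
      ((size L)%:R : R) <= 2 ^+ max_degree adj *
        (((#|V| * max_degree adj)%N)%:R `^ (c%:R * ln (#|V|%:R))).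
Proof.
exists 28%N => R V adj l adj_simple odd_l.
have [v lv] := odd_charge_vertex odd_l.
have [D0|Dpos] := posnP (max_degree adj).
  exists [::]; split; last by rewrite mulr_ge0 ?exprn_ge0 ?powR_ge0.
  apply: (isolated_odd_vertex R lv).
  by apply/eqP; rewrite -leqn0 -D0 degree_le_max.
have n2 := two_vertices adj_simple Dpos.
set n := #|V|; set t := trunc_log 2 n.
have [L [KL sL]] := tseitin_refutation R adj_simple odd_l (ltnW (trunc_log_ltn n (ltnSn 1))).
exists L; split => //.
have X2 : (2 <= n * max_degree adj)%N by nia.
apply: le_trans (_ : (2 ^ max_degree adj * (n * max_degree adj) ^ (6 * t + 8))%N%:R <= _).
  rewrite ler_nat; apply: leq_trans sL _.
  exact: budget_arith X2 (edge_count_le adj_simple).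
rewrite natrM natrX ler_wpM2l ?exprn_ge0 //.
apply: pow_le_powR_ln => //; first by lia.
by apply: trunc_logP => //; lia.
Qed.
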